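(* Consider the random directed graph $\mathcal{G}_{n,1/2}$ on $n$ vertices (each ordered pair of distinct vertices is an edge independently with probability $\frac12$, so all such directed graphs are equally likely), with an arbitrary partition $(V_1,V_P)$ of the vertices into player-1 and probabilistic vertices and an arbitrary nonempty target (B\''uchi) set $B$. For all sufficiently large $n$, the probability that the classical algorithm for almost-sure winning in MDPs with B\''uchi objective $B$ takes more than one iteration is less than $\left(\frac34\right)^n$.
   Context: For $U \subseteq V$ in a graph $G$ with vertex partition $(V_1,V_P)$, the random attractor $\mathrm{Attr}_P(U)$ is $\bigcup_{i\ge 0} X_i$, where $X_0=U$ and $X_{i+1}= X_i \cup \{v\in V_P : E(v)\cap X_i \neq\emptyset\} \cup \{v \in V_1 : E(v)\subseteq X_i\}$, with $E(v)$ the set of out-neighbours of $v$. The classical algorithm for B\''uchi objective $B$ works in iterations: starting from $G^1=G$ with vertex set $V^1$, in iteration $i$ it computes the set $Z^i$ of vertices of $G^i$ with a directed path in $G^i$ to a vertex of $B\cap V^i$, sets $U^i=V^i\setminus Z^i$; if $U^i=\emptyset$ it stops and outputs $Z^i$, otherwise it removes $\mathrm{Attr}_P(U^i)$ (computed in $G^i$) from $G^i$ to get $G^{i+1}$ and continues. *)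

From mathcomp Require Import all_boot all_order all_algebra.
Set Implicit Arguments. Unset Strict Implicit. Unset Printing Implicit Defensive.
Import GRing.Theory Num.Theory.

Section Buchi.
Variable T : finType.
Variable E : rel T.
(* player-1 vertices; probabilistic vertices are the complement ~: V1 *)
Variable V1 : {set T}.
Variable B : {set T}.

Definition sub_edge (W : {set T}) : rel T :=
  fun x y => [&& x \in W, y \in W & E x y].

Definition out_nb (W : {set T}) (v : T) : {set T} :=
  [set u in W | E v u].

Definition reachB (W : {set T}) : {set T} :=
  [set v in W | [exists b in B :&: W, connect (sub_edge W) v b]].

Definition attr_step (W : {set T}) (X : {set T}) : {set T} :=
  X :|: [set v in W :&: ~: V1 | out_nb W v :&: X != set0]
    :|: [set v in W :&: V1 | out_nb W v \subset X].

(* Attr_P(U) in G[W]: union of the increasing chain X_0 = U, X_{i+1} = step X_i;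
   the chain stabilises after at most #|T| steps *)
Definition attrP (W U : {set T}) : {set T} := iter #|T| (attr_step W) U.

Fixpoint buchi_iters (k : nat) (W : {set T}) : nat :=
  match k with
  | 0 => 0
  | k'.+1 =>
      let Z := reachB W in
      let U := W :\: Z in
      if U == set0 then 1 else (buchi_iters k' (W :\: attrP W U)).+1
  end.

(* each non-final iteration removes a nonempty set, so #|T|.+1 iterations
   always suffice: this is the total iteration count of the algorithm on G *)
Definition buchi_iterations : nat := buchi_iters #|T|.+1 [set: T].

End Buchi.

(* the sample space of G_{n,1/2}: all loopless directed graphs on 'I_n,
   represented by their edge sets; all equally likely *)
Definition digraphs (n : nat) : {set {set 'I_n * 'I_n}} :=
  [set E : {set 'I_n * 'I_n} | [forall v : 'I_n, (v, v) \notin E]].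

Definition edge_rel n (E : {set 'I_n * 'I_n}) : rel 'I_n :=
  fun x y => (x, y) \in E.

Definition prob_multi_iter (n : nat) (V1 B : {set 'I_n}) : rat :=
  (#|[set E in digraphs n | (1 < buchi_iterations (edge_rel E) V1 B)%N]|%:R
    / #|digraphs n|%:R)%R.

(* If the algorithm needs a second iteration, the set of vertices with no path
   to B is nonempty, proper (B is nonempty) and has no edge leaving it.  For a
   fixed S with |S| = k, the probability that no edge leaves S is 2^-k(n-k), so
   a union bound over S gives at most sum_(0<k<n) C(n,k) 2^-k(n-k), and since
   C(n,k) <= n^min(k,n-k) and n <= 2^(n/2), every term is at most n 2^-(n/2).
   Finally (n+1) n 2^-(n/2) < (3/4)^n as soon as n >= 241. *)

From mathcomp Require Import all_boot all_order all_algebra zify.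
Set Implicit Arguments. Unset Strict Implicit. Unset Printing Implicit Defensive.
Import GRing.Theory Num.Theory.

Lemma card_bigcup_le (I T : finType) (P : pred I) (F : I -> {set T}) :
  #|\bigcup_(i | P i) F i| <= \sum_(i | P i) #|F i|.
Proof.
elim/big_rec2: _ => [|i m A _ IH]; first by rewrite cards0.
by rewrite cardsU (leq_trans (leq_subr _ _)) ?leq_add.
Qed.

Lemma sum_by_card (T : finType) (P : pred nat) (F : nat -> nat) :
  \sum_(S : {set T} | P #|S|) F #|S| = \sum_(k < #|T|.+1 | P k) 'C(#|T|, k) * F k.
Proof.
rewrite (partition_big (fun S : {set T} => inord #|S| : 'I_#|T|.+1) (fun k => P k)) /=;
  last by move=> S PS; rewrite inordK ?ltnS ?max_card.
apply: eq_bigr => k Pk.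
rewrite (eq_bigl (fun S : {set T} => #|S| == k)); last first.
  move=> S; rewrite -val_eqE /= inordK ?ltnS ?max_card //.
  by case: eqP => [->|]; rewrite ?Pk ?andbF.
rewrite (eq_bigr (fun=> F k)); last by move=> S /eqP->.
rewrite sum_nat_const -card_draws; congr (_ * _).
by apply: eq_card => S; rewrite inE.
Qed.

Lemma bin_leq_exp n m : 'C(n, m) <= n ^ m.
Proof.
rewrite (leq_trans (leq_pmulr _ (fact_gt0 m))) // bin_ffact ffact_prod.
have -> : n ^ m = \prod_(i < m) n by rewrite prod_nat_const card_ord.
by apply: leq_prod => i _; apply: leq_subr.
Qed.

Lemma leq_expn2r m n e : m <= n -> m ^ e <= n ^ e.
Proof. by move=> le_mn; elim: e => // e IH; rewrite !expnS leq_mul. Qed.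

Lemma bin_exp2_le n k h : 0 < k -> h <= n - k -> n <= 2 ^ h ->
  'C(n, k) * 2 ^ h <= n * 2 ^ (k * (n - k)).
Proof.
case: k => // k _ h_le n_le; set m := n - k.+1 in h_le *.
have n_le_exp : n <= 2 ^ m by rewrite (leq_trans n_le) ?leq_exp2l.
have -> : 2 ^ (k.+1 * m) = (2 ^ m) ^ k * 2 ^ m by rewrite -expnM -expnD mulSn addnC mulnC.
rewrite (leq_trans (leq_mul (bin_leq_exp n k.+1) (leqnn _))) //.
rewrite expnS -mulnA leq_mul // leq_mul ?leq_exp2l //.
exact: leq_expn2r.
Qed.

Lemma bin_exp2_half_le n k : 0 < k < n -> n <= 2 ^ n./2 ->
  'C(n, k) * 2 ^ n./2 <= n * 2 ^ (k * (n - k)).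
Proof.
case/andP=> k_gt0 k_lt_n n_le.
have [h_le | h_gt] := leqP n./2 (n - k); first exact: bin_exp2_le.
have half_le : n./2 <= k.
  by move: h_gt; rewrite -[in n - k](odd_double_half n) -addnn; lia.
rewrite -(bin_sub (ltnW k_lt_n)).
have -> : k * (n - k) = (n - k) * (n - (n - k)) by rewrite (subKn (ltnW k_lt_n)) mulnC.
apply: bin_exp2_le => //; first by rewrite subn_gt0.
by rewrite (subKn (ltnW k_lt_n)).
Qed.

Lemma exp8_sqr_lt_exp9 j : 120 <= j -> 8 * (2 * j + 1) ^ 2 * 8 ^ j < 9 ^ j.
Proof.
elim: j => // j IH; rewrite leq_eqVlt => /orP[/eqP<- | /[dup] j_ge /IH {}IH]; first by lia.
have step : (2 * j.+1 + 1) ^ 2 * 8 <= 9 * (2 * j + 1) ^ 2 by nia.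
by rewrite (expnS 8) (expnS 9); nia.
Qed.

Lemma poly_exp4_lt_exp3_exp2_half n :
  241 <= n -> n.+1 * n * 4 ^ n < 3 ^ n * 2 ^ n./2.
Proof.
move=> n_ge; set j := n./2.
have n_eq : n = j.*2 + odd n by rewrite /j -[in LHS](odd_double_half n) addnC.
have odd_le1 : odd n <= 1 by case: (odd n).
have lt89 : 8 * (2 * j + 1) ^ 2 * 8 ^ j < 9 ^ j by apply: exp8_sqr_lt_exp9; lia.
have exp4_le : 4 ^ n <= 4 * (8 ^ j * 2 ^ j).
  by rewrite -expnMn -[8 * 2]/(4 ^ 2) -expnM -expnS leq_exp2l //; lia.
have exp9_le : 9 ^ j <= 3 ^ n by rewrite -[9]/(3 ^ 2) -expnM leq_exp2l //; lia.
have poly_le : n.+1 * n <= 2 * (2 * j + 1) ^ 2 by nia.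
have exp2_gt0 : 0 < 2 ^ j by rewrite expn_gt0.
by nia.
Qed.

Lemma self_leq_exp2_half n : 241 <= n -> n <= 2 ^ n./2.
Proof.
move=> n_ge; have := poly_exp4_lt_exp3_exp2_half n_ge.
have : 3 ^ n <= 4 ^ n by rewrite leq_exp2r //; lia.
by nia.
Qed.

Section UnreachedSet.
Variables (T : finType) (E : rel T) (V1 B : {set T}).

Definition unreached : {set T} := ~: reachB E B [set: T].

Lemma buchi_iterations_gt1 : 1 < buchi_iterations E V1 B -> unreached != set0.
Proof. by rewrite /buchi_iterations /= setTD; case: ifP. Qed.

Lemma unreached_closed x y : x \in unreached -> E x y -> y \in unreached.
Proof.
rewrite !inE /= => x_unreached Exy; apply: contraNN x_unreached.
case/existsP=> b /andP[Bb y_to_b]; apply/existsP; exists b; rewrite Bb.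
by apply: connect_trans y_to_b; apply: connect1; rewrite /sub_edge !inE.
Qed.

Lemma unreached_proper : B != set0 -> unreached != [set: T].
Proof.
case/set0Pn=> b Bb; apply/eqP=> /setP/(_ b); rewrite !inE => /negP; apply.
by apply/existsP; exists b; rewrite !inE Bb connect0.
Qed.

End UnreachedSet.

Definition loopless_pairs n : {set 'I_n * 'I_n} := [set p | p.1 != p.2].

Definition closed_digraphs n (S : {set 'I_n}) : {set {set 'I_n * 'I_n}} :=
  powerset (loopless_pairs n :\: setX S (~: S)).

Lemma card_loopless_pairs n : #|loopless_pairs n| = n * n - n.
Proof.
have -> : loopless_pairs n = ~: [set (i, i) | i in 'I_n].
  apply/setP=> -[x y]; rewrite !inE /=; congr negb; apply/eqP/imsetP=> [->|[z _ [-> ->]]] //.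
  by exists y.
by rewrite cardsCs setCK card_imset ?card_prod ?card_ord // => i j [].
Qed.

Lemma digraphsE n : digraphs n = powerset (loopless_pairs n).
Proof.
apply/setP=> E; rewrite !inE; apply/forallP/subsetP=> [noloop [x y] Exy | sub v].
  by rewrite inE /=; apply: contraTneq Exy => <-; exact: noloop.
by apply/negP=> /sub; rewrite inE eqxx.
Qed.

Lemma card_closed_digraphs n (S : {set 'I_n}) :
  #|closed_digraphs S| = 2 ^ (n * n - n - #|S| * (n - #|S|)).
Proof.
rewrite card_powerset cardsDS ?cardsX ?card_loopless_pairs.
  by rewrite [#|~: S|]cardsCs setCK card_ord.
by apply/subsetP=> -[x y]; rewrite !inE /=; case/andP=> Sx; apply: contraNneq => <-.
Qed.

Lemma multi_iter_sub_closed n (V1 B : {set 'I_n}) : B != set0 ->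
  [set E in digraphs n | 1 < buchi_iterations (edge_rel E) V1 B] \subset
  \bigcup_(S : {set 'I_n} | 0 < #|S| < n) closed_digraphs S.
Proof.
move=> B_neq0; apply/subsetP=> E; rewrite inE digraphsE powersetE => /andP[loopless multi].
apply/bigcupP; exists (unreached (edge_rel E) B).
  rewrite card_gt0 (buchi_iterations_gt1 multi) /=.
  by rewrite -[n in _ < n]card_ord -cardsT proper_card // properT unreached_proper.
rewrite powersetE; apply/subsetP=> -[x y] Exy.
rewrite in_setD (subsetP loopless _ Exy) andbT in_setX /=.
by apply/negP=> /andP[x_unreached]; rewrite in_setC (unreached_closed x_unreached Exy).
Qed.

Lemma card_multi_iter_le n (V1 B : {set 'I_n}) : B != set0 -> n <= 2 ^ n./2 ->
  #|[set E in digraphs n | 1 < buchi_iterations (edge_rel E) V1 B]| * 2 ^ n./2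
    <= n.+1 * n * #|digraphs n|.
Proof.
move=> B_neq0 n_le; set d := n * n - n.
have cut_le k : 0 < k < n -> k * (n - k) <= d by move=> ?; rewrite /d; nia.
apply: leq_trans (leq_mul (subset_leq_card (multi_iter_sub_closed V1 B_neq0)) (leqnn _)) _.
rewrite digraphsE card_powerset card_loopless_pairs -/d.
apply: leq_trans (leq_mul (card_bigcup_le _ _) (leqnn _)) _.
under eq_bigr => S _ do rewrite card_closed_digraphs -/d.
rewrite (@sum_by_card _ (fun k => 0 < k < n) (fun k => 2 ^ (d - k * (n - k)))) card_ord.
rewrite big_distrl /= (@leq_trans (\sum_(k < n.+1 | 0 < k < n) n * 2 ^ d)) //.
  apply: leq_sum => k k_range.
  rewrite -[in leqRHS](subnK (cut_le k k_range)) expnD mulnAC [leqRHS]mulnCA mulnC leq_mul2l.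
  by rewrite bin_exp2_half_le ?orbT.
by rewrite sum_nat_const -mulnA leq_mul2r (leq_trans (max_card _)) ?card_ord ?orbT.
Qed.

Local Open Scope ring_scope.

Theorem theorem3 :
  exists N : nat, forall n : nat, (N <= n)%N ->
    forall V1 B : {set 'I_n}, B != set0 ->
      prob_multi_iter V1 B < (3 / 4 : rat) ^+ n.
Proof.
exists 241%N => n n_ge V1 B B_neq0.
have count := card_multi_iter_le V1 B_neq0 (self_leq_exp2_half n_ge).
have growth := poly_exp4_lt_exp3_exp2_half n_ge.
have digraphs_gt0 : (0 < #|digraphs n|)%N by rewrite digraphsE card_powerset expn_gt0.
have exp2_gt0 : (0 < 2 ^ n./2)%N by rewrite expn_gt0.
set bad := #|_| in count *.
have ratio : (bad * 4 ^ n < 3 ^ n * #|digraphs n|)%N.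
  rewrite -(ltn_pmul2r exp2_gt0) mulnAC (leq_ltn_trans (leq_mul count (leqnn _))) //.
  by rewrite mulnAC [ltnRHS]mulnAC ltn_pmul2r.
rewrite /prob_multi_iter -/bad ltr_pdivrMr ?ltr0n // expr_div_n mulrAC.
by rewrite ltr_pdivlMr ?exprn_gt0 // -!natrX -!natrM ltr_nat.
Qed.
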